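(* Let $G$ be a graph, $t\in\mathbb{N}$, and let $H$ be a connected subgraph of $G$ such that $\mathrm{tw}\big(G[N_G[H]]\cup\binom{N_G(H)}{2}\big)\le 2$. Let $G'$ be the graph obtained from $G$ by deleting $V(H)$ and adding an edge between every pair of distinct vertices of $N_G(H)$. Then $(G,t)$ has a solution if and only if $(G',t)$ has a solution.
   Context: For a graph $G$ and $t\in\mathbb{N}$, a solution for $(G,t)$ is a set $S\subseteq V(G)$ with $|S|\le t$ and $\mathrm{tw}(G-S)\le 2$ ($\mathrm{tw}$ = treewidth). $N_G(H)$ is the set of vertices outside $V(H)$ adjacent to $V(H)$, $N_G[H]=V(H)\cup N_G(H)$. For a graph $F$ and a set $E'$ of vertex pairs, $F\cup E'$ denotes $F$ with the pairs of $E'$ whose both endpoints lie in $V(F)$ added as edges. *)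

From mathcomp Require Import all_boot.
Set Implicit Arguments. Unset Strict Implicit. Unset Printing Implicit Defensive.

(* A (simple, finite) graph is represented by a vertex set [A : {set V}]
   inside an ambient finite type [V], together with an adjacency relation
   [E : rel V]; only edges with both endpoints in [A] count. *)

(* A tree on the node type 'I_n.+1: symmetric, irreflexive, connected,
   with exactly (number of nodes - 1) edges (each counted twice as an
   ordered pair). *)
Definition is_tree (n : nat) (T : rel 'I_n.+1) : Prop :=
  [/\ symmetric T, irreflexive T,
      (forall x y : 'I_n.+1, connect T x y)
    & #|[set p : 'I_n.+1 * 'I_n.+1 | T p.1 p.2]| = 2 * n].

Definition tree_decomposition_width_le (V : finType) (A : {set V}) (E : rel V)
    (k : nat) (n : nat) (T : rel 'I_n.+1) (B : 'I_n.+1 -> {set V}) : Prop :=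
  is_tree T /\
  [/\ (forall i, B i \subset A),
      (forall v, v \in A -> exists i, v \in B i),
      (forall u v, u \in A -> v \in A -> E u v -> exists i, (u \in B i) && (v \in B i)),
      (forall v (i j : 'I_n.+1), v \in B i -> v \in B j ->
          connect [rel a b | [&& T a b, v \in B a & v \in B b]] i j)
    & (forall i, #|B i| <= k.+1)].

Definition tw_le (V : finType) (A : {set V}) (E : rel V) (k : nat) : Prop :=
  exists n (T : rel 'I_n.+1) (B : 'I_n.+1 -> {set V}),
    tree_decomposition_width_le A E k T B.

Definition solution (V : finType) (A : {set V}) (E : rel V) (t : nat) : Prop :=
  exists S : {set V}, [/\ S \subset A, #|S| <= t & tw_le (A :\: S) E 2].

Definition nbh (V : finType) (A : {set V}) (E : rel V) (X : {set V}) : {set V} :=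
  [set v in A | (v \notin X) && [exists u in X, E u v]].

Definition add_clique (V : finType) (E : rel V) (N : {set V}) : rel V :=
  [rel x y | E x y || [&& x != y, x \in N & y \in N]].

Definition connected_subgraph (V : finType) (A : {set V}) (E : rel V)
    (X : {set V}) (F : rel V) : Prop :=
  [/\ X \subset A, X != set0,
      (forall u v, u \in X -> v \in X -> F u v -> E u v),
      symmetric F
    & forall u v, u \in X -> v \in X ->
        connect [rel a b | [&& F a b, a \in X & b \in X]] u v].

(* Since H is connected, contracting it to one of its vertices turns
   G[N[H]] + clique(N(H)) into a complete graph on N(H) and that vertex, so
   |N(H)| <= 2 and G' has at most one edge not in G - V(H).  A solution S of G
   yields one of G' by trading S ∩ V(H) for a vertex of N(H), or, when S misses
   H and N(H), by contracting H into a neighbour.  Conversely G - S is the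
   clique sum, along N(H) - S, of G' - S and of (G[N[H]] + clique(N(H))) - S,
   and clique sums do not increase treewidth. *)

From mathcomp Require Import all_boot zify.
Set Implicit Arguments. Unset Strict Implicit. Unset Printing Implicit Defensive.

Lemma connect_homo (T1 T2 : finType) (e1 : rel T1) (e2 : rel T2) (f : T1 -> T2) :
  (forall x y, e1 x y -> e2 (f x) (f y)) ->
  forall x y, connect e1 x y -> connect e2 (f x) (f y).
Proof.
move=> ef x y /connectP[p + ->]; elim: p x => [|z p IH] x /=.
  by rewrite connect0.
by case/andP=> exz pz; apply: connect_trans (connect1 (ef _ _ exz)) (IH _ pz).
Qed.

Lemma connect_neq_step (T : finType) (e : rel T) x y :
  connect e x y -> x != y -> exists m, e x m.
Proof.
move=> /connectP[[|m p] /= + ->]; first by rewrite eqxx.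
by case/andP=> exm _ _; exists m.
Qed.

Lemma sum_pred_card (I : finType) (P : pred I) : \sum_i (P i : nat) = #|P|.
Proof.
rewrite -sum1_card [in RHS]big_mkcond /=.
by apply: eq_bigr => i _; rewrite unfold_in; case: (P i).
Qed.

Lemma card_rel_pairs (I : finType) (R : rel I) :
  #|[set p : I * I | R p.1 p.2]| = \sum_x \sum_y (R x y : nat).
Proof.
rewrite pair_bigA /= -sum_pred_card; apply: eq_bigr => p _.
by rewrite -[LHS]/(nat_of_bool (p \in [set p0 | R p0.1 p0.2])) inE.
Qed.

(* Counting: with all degrees >= 2 there would be at least 2(n+2) ordered edges. *)
Lemma is_tree_leaf n (T : rel 'I_n.+2) :
  is_tree T -> exists l p, T l p /\ forall w, T l w -> w = p.
Proof.
case=> sT iT cT cnt.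
have [/existsP[l /existsP[p /andP[Tlp /forallP H]]] | noleaf] :=
  boolP [exists l, exists p, T l p && [forall w, T l w ==> (w == p)]].
  by exists l, p; split=> // w Tw; apply/eqP/(implyP (H w)).
have deg2 x : 1 < #|T x|.
  have [y yx] : exists y, y != x.
    case: (x =P ord0) => [->|/eqP x0]; last by exists ord0; rewrite eq_sym.
    by exists ord_max; rewrite -val_eqE.
  have [m Txm] : exists m, T x m by apply: connect_neq_step (cT x y) _; rewrite eq_sym.
  rewrite ltnNge; apply: contra noleaf => le1.
  apply/existsP; exists x; apply/existsP; exists m; rewrite Txm /=.
  apply/forallP => w; apply/implyP => Txw; apply/negPn/negP => wm.
  by move: le1; rewrite leqNgt; apply/negP/negPn/card_gt1P; exists w, m.
move: cnt; rewrite card_rel_pairs.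
have : \sum_(x < n.+2) 2 <= \sum_x \sum_y (T x y : nat).
  by apply: leq_sum => x _; rewrite sum_pred_card.
rewrite sum_nat_const card_ord; lia.
Qed.

(* A shortest path cannot pass through [l]: it would visit [p] twice. *)
Lemma connect_unlift_leaf n (e : rel 'I_n.+2) l p x y :
  (forall w, e l w -> w = p) -> (forall w, e w l -> w = p) ->
  connect e (lift l x) (lift l y) ->
  connect [rel a b | e (lift l a) (lift l b)] x y.
Proof.
move=> outl inl /connectP[s es lasts].
case: (shortenP es) lasts => {es}s es uniq_s _ lasts.
have ls : l \notin s.
  apply/negP => ls; move: es uniq_s lasts; case/splitPr: ls => s1 s2.
  rewrite cat_path /= => /and3P[_ /inl el pl].
  rewrite last_cat /=; case: s2 pl => [|w s3] /=.
    by move=> _ _ /eqP; rewrite eq_sym (negbTE (neq_lift _ _)).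
  case/andP=> /outl -> _.
  move=> U _; move: (U : uniq ((lift l x :: s1) ++ [:: l, p & s3])).
  rewrite cat_uniq => /and3P[_ /hasPn/(_ p)] + _.
  by rewrite !inE eqxx orbT => /(_ isT); rewrite -in_cons -el mem_last.
clear uniq_s; elim: s x es ls lasts => [|z s IH] x /=.
  by move=> _ _ /lift_inj ->; apply: connect0.
case/andP=> ez es; rewrite inE negb_or => /andP[zl ls] lasts.
case: (unliftP l z) zl ez es lasts => [z' ->|->]; last by rewrite eqxx.
by move=> _ ez es lasts; apply: connect_trans (connect1 ez) (IH z' es ls lasts).
Qed.

Lemma is_tree_remove_leaf n (T : rel 'I_n.+2) l p :
  is_tree T -> T l p -> (forall w, T l w -> w = p) ->
  is_tree [rel a b | T (lift l a) (lift l b)].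
Proof.
case=> sT iT cT cnt Tlp outl.
have inl w : T w l -> w = p by rewrite sT; apply: outl.
split.
- by move=> a b /=; apply: sT.
- by move=> a /=; apply: iT.
- by move=> a b; apply: connect_unlift_leaf outl inl (cT _ _).
rewrite card_rel_pairs /=; move: cnt; rewrite card_rel_pairs.
have -> : \sum_(x < n.+2) \sum_(y < n.+2) (T x y : nat) =
    \sum_(y < n.+2) (T l y : nat) + (\sum_(x < n.+1) (T (lift l x) l : nat) +
    \sum_(x < n.+1) \sum_(y < n.+1) (T (lift l x) (lift l y) : nat)).
  rewrite (bigD1_ord l) //=; congr (_ + _); rewrite -big_split /=.
  by apply: eq_bigr => x _; rewrite (bigD1_ord l).
have degl : \sum_(y < n.+2) (T l y : nat) = 1.
  rewrite sum_pred_card -(card1 p); apply: eq_card => y.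
  by rewrite unfold_in /=; apply/idP/eqP => [/outl | ->].
have degl' : \sum_(x < n.+1) (T (lift l x) l : nat) = 1.
  move: degl; rewrite (bigD1_ord l) //= iT /=.
  by under eq_bigr => x _ do rewrite sT.
by rewrite degl degl' addnA mulnS => /eqP; rewrite eqn_add2l => /eqP.
Qed.

(* Helly property for subtrees, by induction on the tree deleting a leaf. *)
Lemma tree_bags_helly (V : finType) n (T : rel 'I_n.+1) (B : 'I_n.+1 -> {set V})
    (Q : {set V}) :
  is_tree T ->
  (forall v i j, v \in Q -> v \in B i -> v \in B j ->
     connect [rel a b | [&& T a b, v \in B a & v \in B b]] i j) ->
  (forall u v, u \in Q -> v \in Q -> exists i, (u \in B i) && (v \in B i)) ->
  exists i, Q \subset B i.
Proof.
elim: n T B => [|n IH] T B tT Bconn Bpair.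
  exists ord0; apply/subsetP => v vQ.
  by have [i /andP[vi _]] := Bpair v v vQ vQ; rewrite -(ord1 i).
have [l [p [Tlp outl]]] := is_tree_leaf tT.
have [QBl|] := boolP (Q \subset B l); first by exists l.
case/subsetPn=> w wQ wl.
have [sT iT _ _] := tT.
have inl w' : T w' l -> w' = p by rewrite sT; apply: outl.
have lp q : q \in Q -> q \in B l -> q \in B p.
  move=> qQ qBl; apply/negPn/negP => qp.
  have [j /andP[qj wj]] := Bpair q w qQ wQ.
  have jl : l != j by apply: contraNneq wl => ->.
  have [m /= /and3P[Tlm _ qm]] := connect_neq_step (Bconn q l j qQ qBl qj) jl.
  by move: qm; rewrite (outl m Tlm) (negbTE qp).
have pl : p != l by apply: contraTneq Tlp => ->; rewrite iT.
case: (unliftP l p) pl => [p' ep _|->]; last by rewrite eqxx.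
have [i' Qi'] : exists i', Q \subset B (lift l i'); last by exists (lift l i').
apply: (IH _ (fun a => B (lift l a)) (is_tree_remove_leaf tT Tlp outl)).
- move=> v i j vQ vi vj.
  apply: (@connect_unlift_leaf n [rel a b | [&& T a b, v \in B a & v \in B b]] l p).
  + by move=> w' /= /and3P[/outl].
  + by move=> w' /= /and3P[/inl].
  + exact: Bconn.
- move=> u v uQ vQ; have [i /andP[ui vi]] := Bpair u v uQ vQ.
  case: (unliftP l i) ui vi => [i' ->|->] ui vi; first by exists i'; rewrite ui vi.
  by exists p'; rewrite -ep !lp.
Qed.

Section GlueTrees.
Variables (n1 n2 : nat) (T1 : rel 'I_n1.+1) (T2 : rel 'I_n2.+1).
Variables (i1 : 'I_n1.+1) (i2 : 'I_n2.+1).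

Definition glue_rel : rel 'I_(n1.+1 + n2.+1) :=
  fun x y => match split x, split y with
  | inl a, inl b => T1 a b
  | inr a, inr b => T2 a b
  | inl a, inr b => (a == i1) && (b == i2)
  | inr a, inl b => (a == i2) && (b == i1) end.

Lemma glue_relLL a b : glue_rel (lshift _ a) (lshift _ b) = T1 a b.
Proof. by rewrite /glue_rel !(unsplitK (inl _)). Qed.

Lemma glue_relRR a b : glue_rel (rshift _ a) (rshift _ b) = T2 a b.
Proof. by rewrite /glue_rel !(unsplitK (inr _)). Qed.

Lemma glue_relLR a b : glue_rel (lshift _ a) (rshift _ b) = (a == i1) && (b == i2).
Proof. by rewrite /glue_rel (unsplitK (inl _)) (unsplitK (inr _)). Qed.

Lemma glue_relRL a b : glue_rel (rshift _ a) (lshift _ b) = (a == i2) && (b == i1).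
Proof. by rewrite /glue_rel (unsplitK (inl _)) (unsplitK (inr _)). Qed.

Lemma sum_indicator_pair m1 m2 (j1 : 'I_m1) (j2 : 'I_m2) :
  \sum_(a < m1) \sum_(b < m2) ((a == j1) && (b == j2) : nat) = 1.
Proof.
rewrite (bigD1 j1) //= [X in _ + X]big1 ?addn0 => [|a aj]; last first.
  by rewrite big1 // => b _; rewrite (negbTE aj).
by rewrite (bigD1 j2) //= !eqxx [X in _ + X]big1 // => b bj; rewrite (negbTE bj).
Qed.

Lemma is_tree_glue : is_tree T1 -> is_tree T2 -> @is_tree (n1 + n2.+1) glue_rel.
Proof.
case=> sT1 iT1 cT1 cnt1 [sT2 iT2 cT2 cnt2].
have sG : symmetric glue_rel.
  move=> x y; rewrite /glue_rel.
  by case: (split x) => a; case: (split y) => b //; rewrite andbC.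
have to_i1 x : connect glue_rel x (lshift _ i1).
  rewrite -[x]splitK; case: (split x) => a /=.
    by apply: (connect_homo (e1 := T1)) => // u v; rewrite glue_relLL.
  have: connect glue_rel (rshift n1.+1 a) (rshift n1.+1 i2).
    by apply: (connect_homo (e1 := T2)) => // u v; rewrite glue_relRR.
  by move/connect_trans; apply; apply: connect1; rewrite glue_relRL !eqxx.
split => //.
- by move=> x; rewrite /glue_rel; case: (@split n1.+1 n2.+1 x).
- move=> x y; apply: connect_trans (to_i1 x) _.
  by rewrite (sym_connect_sym sG).
rewrite card_rel_pairs (@big_split_ord _ _ _ n1.+1 n2.+1) /=.
under eq_bigr => x _ do rewrite (@big_split_ord _ _ _ n1.+1 n2.+1) /=.
under [X in _ + X = _]eq_bigr => x _ do rewrite (@big_split_ord _ _ _ n1.+1 n2.+1) /=.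
rewrite !big_split /=.
under eq_bigr => a _ do under eq_bigr => b _ do rewrite glue_relLL.
under [X in _ + X + _]eq_bigr => a _ do under eq_bigr => b _ do rewrite glue_relLR.
under [X in _ + (X + _)]eq_bigr => a _ do under eq_bigr => b _ do rewrite glue_relRL.
under [X in _ + (_ + X)]eq_bigr => a _ do under eq_bigr => b _ do rewrite glue_relRR.
rewrite -!card_rel_pairs cnt1 cnt2 !sum_indicator_pair; lia.
Qed.

End GlueTrees.

Lemma td_clique_in_bag (V : finType) (A Q : {set V}) (E : rel V) k n
    (T : rel 'I_n.+1) (B : 'I_n.+1 -> {set V}) :
  tree_decomposition_width_le A E k T B -> Q \subset A ->
  (forall u v, u \in Q -> v \in Q -> u != v -> E u v) ->
  exists i, Q \subset B i.
Proof.
move=> [tT [_ Bcov Bedge Bconn _]] /subsetP QA Qclique.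
apply: (tree_bags_helly tT) => [v i j _|u v uQ vQ]; first exact: Bconn.
have [<-|uv] := eqVneq u v.
  by have [i ui] := Bcov u (QA u uQ); exists i; rewrite ui.
by apply: Bedge; rewrite ?QA ?Qclique.
Qed.

Lemma tw_le_complete_card (V : finType) (A : {set V}) k :
  tw_le A [rel u v | u != v] k -> #|A| <= k.+1.
Proof.
move=> [n [T [B D]]]; have [i AB] := td_clique_in_bag D (subxx A) (fun u v _ _ => id).
by case: D => _ [_ _ _ _ Bsz]; apply: leq_trans (subset_leq_card AB) (Bsz i).
Qed.

(* Minor monotonicity: the fibres of [f] are the branch sets. *)
Lemma tw_le_map (V : finType) (A A' : {set V}) (E E' : rel V) k (f : V -> V) :
  tw_le A E k ->
  (forall v, v \in A' -> exists2 x, x \in A & f x = v) ->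
  (forall u v, u \in A' -> v \in A' -> E' u v ->
     exists x y, [/\ x \in A, y \in A, f x = u, f y = v & E x y]) ->
  (forall x y, x \in A -> y \in A -> f x = f y -> f x \in A' ->
     connect [rel a b | [&& E a b, a \in A, b \in A, f a == f x & f b == f x]] x y) ->
  tw_le A' E' k.
Proof.
move=> [n [T [B [tT [BA Bcov Bedge Bconn Bsz]]]]] fcov fedge fconn.
exists n, T, (fun i => (f @: B i) :&: A'); split=> //; split.
- by move=> i; apply: subsetIr.
- move=> v vA'; have [x xA fxv] := fcov v vA'; subst v.
  by have [i xi] := Bcov x xA; exists i; rewrite inE imset_f.
- move=> u v uA' vA' /(fedge u v uA' vA')[x [y [xA yA fxu fyv exy]]]; subst u v.
  have [i /andP[xi yi]] := Bedge x y xA yA exy.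
  by exists i; rewrite !inE !imset_f ?uA' ?vA'.
- move=> v i j; rewrite !inE => /andP[/imsetP[x xi ->] vA'] /andP[/imsetP[y yj fxy] _].
  set R := [rel a b | _].
  have subtree_fibre z : f z = f x -> forall a b,
      connect [rel a b | [&& T a b, z \in B a & z \in B b]] a b -> connect R a b.
    move=> fz; apply: connect_sub => a b /= /and3P[Tab za zb].
    by apply: connect1; rewrite /= Tab !inE -fz !imset_f // fz vA'.
  pose reach z := forall l, z \in B l -> connect R i l.
  have reach_step z z' : reach z ->
      [&& E z z', z \in A, z' \in A, f z == f x & f z' == f x] -> reach z'.
    move=> rz /and5P[ezz zA z'A _ /eqP fz'] l z'l.
    have [m /andP[zm z'm]] := Bedge z z' zA z'A ezz.
    by apply: connect_trans (rz m zm) _; apply: (subtree_fibre z' fz'); apply: Bconn.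
  have reach_path s z : reach z ->
      path [rel a b | [&& E a b, a \in A, b \in A, f a == f x & f b == f x]] z s ->
      reach (last z s).
    by elim: s z => [|z' s IH] z //= rz /andP[/(reach_step _ _ rz)/IH].
  have reach_x : reach x by move=> l xl; apply: (subtree_fibre x erefl); apply: Bconn.
  have /connectP[s xs ys] :=
    fconn x y (subsetP (BA i) x xi) (subsetP (BA j) y yj) fxy vA'.
  by apply: (reach_path s x reach_x xs); rewrite -ys.
- move=> i; apply: leq_trans (Bsz i); apply: leq_trans (leq_imset_card f (B i)).
  exact: subset_leq_card (subsetIl _ _).
Qed.

Lemma tw_le_subgraph (V : finType) (A A' : {set V}) (E E' : rel V) k :
  tw_le A E k -> A' \subset A ->
  (forall u v, u \in A' -> v \in A' -> E' u v -> E u v) ->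
  tw_le A' E' k.
Proof.
move=> twA /subsetP A'A E'E; apply: (tw_le_map (f := id) twA).
- by move=> v vA'; exists v; rewrite ?A'A.
- by move=> u v uA' vA' e'uv; exists u, v; split; rewrite ?A'A ?E'E.
- by move=> x y _ _ -> _; apply: connect0.
Qed.

Lemma tw_le_glue (V : finType) (A1 A2 : {set V}) (E1 E2 E : rel V) k n1 n2
    (T1 : rel 'I_n1.+1) (B1 : 'I_n1.+1 -> {set V})
    (T2 : rel 'I_n2.+1) (B2 : 'I_n2.+1 -> {set V}) i1 i2 :
  tree_decomposition_width_le A1 E1 k T1 B1 ->
  tree_decomposition_width_le A2 E2 k T2 B2 ->
  A1 :&: A2 \subset B1 i1 -> A1 :&: A2 \subset B2 i2 ->
  (forall u v, u \in A1 :|: A2 -> v \in A1 :|: A2 -> E u v ->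
     [&& u \in A1, v \in A1 & E1 u v] || [&& u \in A2, v \in A2 & E2 u v]) ->
  tw_le (A1 :|: A2) E k.
Proof.
move=> [tT1 [BA1 Bcov1 Bedge1 Bconn1 Bsz1]] [tT2 [BA2 Bcov2 Bedge2 Bconn2 Bsz2]]
  sub1 sub2 Esplit.
pose B x := match split x with inl a => B1 a | inr b => B2 b end.
have BL a : B (lshift n2.+1 a) = B1 a by rewrite /B (unsplitK (inl _)).
have BR a : B (rshift n1.+1 a) = B2 a by rewrite /B (unsplitK (inr _)).
exists (n1 + n2.+1), (glue_rel T1 T2 i1 i2), B.
split; first exact: is_tree_glue.
split.
- move=> x; rewrite /B; case: (@split n1.+1 n2.+1 x) => a.
    exact: subset_trans (BA1 a) (subsetUl _ _).
  exact: subset_trans (BA2 a) (subsetUr _ _).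
- move=> v; rewrite inE => /orP[/Bcov1[i vi]|/Bcov2[i vi]].
    by exists (lshift n2.+1 i); rewrite BL.
  by exists (rshift n1.+1 i); rewrite BR.
- move=> u v uA vA /(Esplit u v uA vA)/orP[]/and3P[uA' vA' e'].
    by have [i uvi] := Bedge1 u v uA' vA' e'; exists (lshift n2.+1 i); rewrite BL.
  by have [i uvi] := Bedge2 u v uA' vA' e'; exists (rshift n1.+1 i); rewrite BR.
- move=> v x y; set R := [rel a b | _].
  have liftL a b : connect [rel a b | [&& T1 a b, v \in B1 a & v \in B1 b]] a b ->
      connect R (lshift n2.+1 a) (lshift n2.+1 b).
    by apply: connect_homo => u w /=; rewrite glue_relLL !BL.
  have liftR a b : connect [rel a b | [&& T2 a b, v \in B2 a & v \in B2 b]] a b ->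
      connect R (rshift n1.+1 a) (rshift n1.+1 b).
    by apply: connect_homo => u w /=; rewrite glue_relRR !BR.
  have in_both a b : v \in B1 a -> v \in B2 b -> v \in B1 i1 /\ v \in B2 i2.
    move=> va vb; have vI : v \in A1 :&: A2.
      by rewrite inE (subsetP (BA1 a) _ va) (subsetP (BA2 b) _ vb).
    by split; [apply: (subsetP sub1) | apply: (subsetP sub2)].
  move: x y; change (forall x y : 'I_(n1.+1 + n2.+1),
    v \in B x -> v \in B y -> connect R x y) => x y.
  rewrite -[x]splitK -[y]splitK; case: (split x) => a; case: (split y) => b /=;
    rewrite ?BL ?BR => va vb.
  + exact/liftL/Bconn1.
  + have [v1 v2] := in_both a b va vb.
    apply: connect_trans (liftL _ _ (Bconn1 v a i1 va v1)) _.
    apply: connect_trans (liftR _ _ (Bconn2 v i2 b v2 vb)).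
    by apply: connect1; rewrite /= BL BR v1 v2 glue_relLR !eqxx.
  + have [v1 v2] := in_both b a vb va.
    apply: connect_trans (liftR _ _ (Bconn2 v a i2 va v2)) _.
    apply: connect_trans (liftL _ _ (Bconn1 v i1 b v1 vb)).
    by apply: connect1; rewrite /= BL BR v1 v2 glue_relRL !eqxx.
  + exact/liftR/Bconn2.
- by move=> x; rewrite /B; case: (@split n1.+1 n2.+1 x).
Qed.

Lemma tw_le_clique_sum (V : finType) (A1 A2 : {set V}) (E1 E2 E : rel V) k :
  tw_le A1 E1 k -> tw_le A2 E2 k ->
  (forall u v, u \in A1 :&: A2 -> v \in A1 :&: A2 -> u != v -> E1 u v && E2 u v) ->
  (forall u v, u \in A1 :|: A2 -> v \in A1 :|: A2 -> E u v ->
     [&& u \in A1, v \in A1 & E1 u v] || [&& u \in A2, v \in A2 & E2 u v]) ->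
  tw_le (A1 :|: A2) E k.
Proof.
move=> [n1 [T1 [B1 D1]]] [n2 [T2 [B2 D2]]] clique Esplit.
have [i1 sub1] : exists i1, A1 :&: A2 \subset B1 i1.
  by apply: (td_clique_in_bag D1 (subsetIl _ _)) => u v uI vI /(clique u v uI vI)/andP[].
have [i2 sub2] : exists i2, A1 :&: A2 \subset B2 i2.
  by apply: (td_clique_in_bag D2 (subsetIr _ _)) => u v uI vI /(clique u v uI vI)/andP[].
exact: tw_le_glue D1 D2 sub1 sub2 Esplit.
Qed.

Definition connected_in (V : finType) (E : rel V) (Y : {set V}) : Prop :=
  forall u v, u \in Y -> v \in Y -> connect [rel a b | [&& E a b, a \in Y & b \in Y]] u v.

Lemma connected_in_sub (V : finType) (E E' : rel V) (Y : {set V}) :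
  (forall u v, u \in Y -> v \in Y -> E u v -> E' u v) ->
  connected_in E Y -> connected_in E' Y.
Proof.
move=> EE' conY u v uY vY; apply: connect_sub (conY u v uY vY) => a b /and3P[eab aY bY].
by apply: connect1; rewrite /= EE' ?aY ?bY.
Qed.

Lemma connected_inU1 (V : finType) (E : rel V) (Y : {set V}) y c :
  symmetric E -> connected_in E Y -> y \in Y -> E y c -> connected_in E (c |: Y).
Proof.
move=> sE conY yY eyc.
pose R := [rel a b | [&& E a b, a \in c |: Y & b \in c |: Y]].
have sR : symmetric R by move=> a b; rewrite /= sE [X in _ = _ && X]andbC.
have to_y z : z \in c |: Y -> connect R z y.
  case/setU1P => [->|zY]; first by apply: connect1; rewrite /= sE eyc !inE eqxx yY orbT.
  apply: connect_sub (conY z y zY yY) => a b /and3P[eab aY bY].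
  by apply: connect1; rewrite /= eab !inE aY bY !orbT.
move=> u v uY vY; apply: connect_trans (to_y u uY) _.
by rewrite (sym_connect_sym sR); apply: to_y.
Qed.

Definition contract_to (V : finType) (Y : {set V}) (c x : V) : V :=
  if x \in Y then c else x.

Lemma connect_contract_fibre (V : finType) (A Y : {set V}) (E : rel V) c x y :
  let f := contract_to Y c in
  Y \subset A -> c \in Y -> connected_in E Y ->
  x \in A -> y \in A -> f x = f y ->
  connect [rel a b | [&& E a b, a \in A, b \in A, f a == f x & f b == f x]] x y.
Proof.
move=> f /subsetP YA cY conY xA yA; rewrite /f /contract_to.
have [xY|xY] := boolP (x \in Y); have [yY|yY] := boolP (y \in Y).
- move=> _; apply: connect_sub (conY x y xY yY) => a b /and3P[eab aY bY].
  by apply: connect1; rewrite /= /f /contract_to eab aY bY !YA ?eqxx.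
- by move=> cy; move: yY; rewrite -cy cY.
- by move=> xc; move: xY; rewrite xc cY.
- by move=> ->; apply: connect0.
Qed.

Section ReplaceByClique.
Variables (V : finType) (E : rel V) (HX : {set V}) (HE : rel V).
Local Notation N := (nbh [set: V] E HX).
Local Notation E' := (add_clique E N).

Lemma nbhP v : reflect (v \notin HX /\ exists2 h, h \in HX & E h v) (v \in N).
Proof.
rewrite /nbh inE in_setT /=; apply: (iffP andP).
  by case=> vH /existsP[h /andP[hH ehv]]; split=> //; exists h.
by case=> vH [h hH ehv]; split=> //; apply/existsP; exists h; rewrite hH.
Qed.

Lemma nbh_notin v : v \in N -> v \notin HX.
Proof. by case/nbhP. Qed.

Hypotheses (sE : symmetric E) (HXconn : connected_subgraph [set: V] E HX HE).

Lemma connected_in_HX : connected_in E HX.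
Proof. by case: HXconn => _ _ HEE _ conH; apply: connected_in_sub conH. Qed.

Hypothesis twN : tw_le (HX :|: N) E' 2.

Lemma card_nbh_le2 : #|N| <= 2.
Proof.
have [_ /set0Pn[h0 h0H] _ _ _] := HXconn.
pose f := contract_to HX h0.
have fH h : h \in HX -> f h = h0 by rewrite /f /contract_to => ->.
have fN v : v \in N -> f v = v by move/nbh_notin; rewrite /f /contract_to => /negbTE ->.
have inHN v : (v \in HX) || (v \in N) -> v \in HX :|: N by rewrite in_setU.
have: tw_le (h0 |: N) [rel u v | u != v] 2.
  apply: (tw_le_map (f := f) twN).
  - move=> v /setU1P[->|vN]; first by exists h0; rewrite ?fH ?inHN ?h0H.
    by exists v; rewrite ?fN ?inHN ?vN ?orbT.
  - move=> u v /setU1P[->|uN] /setU1P[->|vN] /=; first by rewrite eqxx.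
    + move=> _; have [_ [h hH ehv]] := nbhP v vN.
      exists h, v; split; rewrite ?inHN ?hH ?vN ?orbT //; first exact: fH.
        exact: fN.
      by rewrite /add_clique /= ehv.
    + move=> _; have [_ [h hH ehu]] := nbhP u uN.
      exists u, h; split; rewrite ?inHN ?hH ?uN ?orbT //; first exact: fN.
        exact: fH.
      by rewrite /add_clique /= sE ehu.
    + move=> uv; exists u, v; rewrite !fN ?inHN ?uN ?vN ?orbT //.
      by split; rewrite // /add_clique /= uv uN vN orbT.
  - move=> x y xA yA fxy _; apply: connect_contract_fibre => //.
    + exact: subsetUl.
    + apply: connected_in_sub connected_in_HX => u v _ _ euv.
      by rewrite /add_clique /= euv.
move/tw_le_complete_card; rewrite cardsU1.
by have -> : (h0 \notin N) by apply: contraL h0H => /nbh_notin.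
Qed.

Lemma tw_le_reduce_sub (S S' : {set V}) :
  tw_le ([set: V] :\: S) E 2 -> S :\: HX \subset S' -> #|N :\: S'| <= 1 ->
  tw_le (~: HX :\: S') E' 2.
Proof.
move=> twS /subsetP SS' N1; apply: (tw_le_subgraph twS).
  apply/subsetP => x; rewrite !in_setD in_setC in_setT andbT => /andP[xS' xH].
  by apply: contra xS' => xS; apply: SS'; rewrite in_setD xS xH.
move=> x y xA yA /orP[//|/and3P[xy xN yN]]; move: N1; rewrite leqNgt => /negP[].
apply/card_gt1P; exists x, y; move: xA yA; rewrite !in_setD => /andP[-> _] /andP[-> _].
by rewrite xN yN.
Qed.

(* When [S] misses [H] and one neighbour [u], contracting [H] into [u] turns
   [G - S] into [G' - S]: the only edge of [G'] not in [G] is the one joining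
   the at most two vertices of [N(H)]. *)
Lemma tw_le_reduce_contract (S : {set V}) u :
  tw_le ([set: V] :\: S) E 2 -> HX \subset ~: S -> u \in N -> u \notin S ->
  tw_le (~: HX :\: S) E' 2.
Proof.
move=> twS /subsetP HS uN uS.
pose f := contract_to (u |: HX) u.
have fH h : h \in HX -> f h = u by move=> hH; rewrite /f /contract_to setU1r.
have fout x : x \notin HX -> f x = x.
  by move=> xH; rewrite /f /contract_to in_setU1 (negbTE xH) orbF; case: eqP.
have inS x : x \in ~: HX :\: S -> x \in [set: V] :\: S.
  by rewrite !in_setD in_setT => /andP[-> _].
have outH x : x \in ~: HX :\: S -> x \notin HX by rewrite in_setD in_setC => /andP[].
have HinS h : h \in HX -> h \in [set: V] :\: S.
  by move/HS; rewrite in_setD in_setT in_setC andbT.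
have one_is_u x y : x \in N -> y \in N -> x != y -> (x == u) || (y == u).
  move=> xN yN xy; apply/negPn/negP; rewrite negb_or => /andP[xu yu].
  have := card_nbh_le2; rewrite leqNgt => /negP[]; apply/card_gt2P.
  by exists x, y, u; split; split; rewrite // eq_sym.
have [h hH ehu] := (nbhP u uN).2.
apply: (tw_le_map (f := f) twS).
- by move=> v vA; exists v; [exact: inS | exact/fout/outH].
- move=> x y xA yA /orP[exy|/and3P[xy xN yN]].
    by exists x, y; split; rewrite ?inS ?fout ?outH.
  case/orP: (one_is_u x y xN yN xy) => /eqP xyu; subst.
    have [_ [h' h'H eh'y]] := nbhP y yN.
    by exists h', y; split; [exact: HinS | exact: inS | exact: fH | exact/fout/outH |].
  have [_ [h' h'H eh'x]] := nbhP x xN.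
  by exists x, h'; split; [exact: inS | exact: HinS | exact/fout/outH | exact: fH |];
    rewrite sE.
- move=> x y xA yA fxy _; apply: connect_contract_fibre => //.
  + by apply/subsetP => z /setU1P[->|/HinS //]; rewrite in_setD in_setT uS.
  + exact: setU11.
  + by apply: connected_inU1 sE connected_in_HX hH ehu.
Qed.

Lemma solution_reduce t : solution [set: V] E t -> solution (~: HX) E' t.
Proof.
move=> [S [_ St twS]].
have [le1|gt1] := leqP #|N :\: S| 1.
  exists (S :\: HX); split.
  - by apply/subsetP => x; rewrite in_setD in_setC => /andP[].
  - exact: leq_trans (subset_leq_card (subsetDl S HX)) St.
  have NSH : N :\: (S :\: HX) \subset N :\: S.
    apply/subsetP => x; rewrite !in_setD => /andP[xS xN]; rewrite xN andbT.
    by apply: contra xS => xS; rewrite xS (nbh_notin xN).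
  exact: tw_le_reduce_sub twS (subxx _) (leq_trans (subset_leq_card NSH) le1).
have NS : N :\: S = N.
  by apply/eqP; rewrite eqEcard subsetDl (leq_trans card_nbh_le2 gt1).
have [u uN] : exists u, u \in N.
  by apply/set0Pn; rewrite -card_gt0 -NS ltnW.
have uS : u \notin S by move: uN; rewrite -NS in_setD => /andP[].
have [/set0Pn[h hSH]|/negPn/eqP SH0] := boolP (S :&: HX != set0).
  exists (u |: (S :\: HX)); split.
  - apply/subsetP => x; rewrite in_setC => /setU1P[->|]; first exact: nbh_notin.
    by rewrite in_setD => /andP[].
  - rewrite cardsU1 cardsD; have: 0 < #|S :&: HX| by apply/card_gt0P; exists h.
    by have := subset_leq_card (subsetIl S HX); lia.
  apply: tw_le_reduce_sub twS (subsetU1 _ _) _.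
  have := card_nbh_le2; rewrite (cardsD1 u N) uN.
  by move/(leq_trans (subset_leq_card _)); apply; apply: setDS; rewrite sub1set setU11.
have SH : [disjoint S & HX] by rewrite -setI_eq0 SH0.
exists S; split => //; first by rewrite -disjoints_subset.
by apply: tw_le_reduce_contract twS _ uN uS; rewrite -disjoints_subset disjoint_sym.
Qed.

Lemma solution_lift t : solution (~: HX) E' t -> solution [set: V] E t.
Proof.
move=> [S [SH St twS]]; exists S; split; rewrite ?subsetT //.
have twNS : tw_le ((HX :|: N) :\: S) E' 2.
  by apply: tw_le_subgraph twN (subsetDl _ _) _.
have split_vertices : (~: HX :\: S) :|: ((HX :|: N) :\: S) = [set: V] :\: S.
  by apply/setP => x; rewrite !inE; case: (x \in HX); case: (x \in S).
rewrite -split_vertices; apply: tw_le_clique_sum twS twNS _ _.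
  have inN w : w \in (~: HX :\: S) :&: ((HX :|: N) :\: S) -> w \in N.
    rewrite in_setI !in_setD in_setC in_setU => /andP[/andP[_ wH] /andP[_]].
    by rewrite (negbTE wH).
  by move=> u v /inN uN /inN vN uv; rewrite /add_clique /= uv uN vN orbT.
move=> x y; rewrite split_vertices !in_setD !in_setT !andbT => xS yS exy.
rewrite xS yS !in_setC !in_setU /add_clique /= exy /= !andbT.
have [xH|xH] := boolP (x \in HX); have [yH|yH] := boolP (y \in HX);
  rewrite //= ?orbT //.
- by apply/nbhP; split => //; exists x.
- by rewrite andbT; apply/nbhP; split => //; exists y; rewrite // sE.
Qed.

End ReplaceByClique.

Theorem mainTheorem3 (V : finType) (E : rel V) (t : nat)
    (HX : {set V}) (HE : rel V) :
  symmetric E -> irreflexive E ->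
  connected_subgraph [set: V] E HX HE ->
  tw_le (HX :|: nbh [set: V] E HX) (add_clique E (nbh [set: V] E HX)) 2 ->
  (solution [set: V] E t <->
   solution (~: HX) (add_clique E (nbh [set: V] E HX)) t).
Proof.
move=> sE _ HXconn twN; split.
- exact: (solution_reduce sE HXconn twN).
- exact: (solution_lift sE twN).
Qed.
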